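(* Let $K$ be a compact Hausdorff space having the extension property and let $I$ be any set. Then every isometric copy of $c_0(I)$ in $C(K)$ is complemented; i.e., for every linear isometric embedding $S:c_0(I)\to C(K)$, the image of $S$ is complemented in $C(K)$.
   Context: $C(K)$ denotes the Banach space of real-valued continuous functions on $K$ with the supremum norm. For a closed set $F\subseteq K$, an extension operator for $F$ in $K$ is a bounded linear map $E:C(F)\to C(K)$ such that $E(f)|_F=f$ for all $f\in C(F)$. $K$ has the extension property if every nonempty closed subset of $K$ admits an extension operator in $K$. *)

From HB Require Import structures.
From mathcomp Require Import all_boot all_order all_algebra.
From mathcomp Require Import all_classical all_reals all_analysis.
Set Implicit Arguments. Unset Strict Implicit. Unset Printing Implicit Defensive.
Import Order.TTheory GRing.Theory Num.Theory numFieldNormedType.Exports.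
Local Open Scope classical_set_scope.
Local Open Scope ring_scope.

(* Supremum norm of f over a set A (sup of |f| on A; sup set0 = 0). *)
Definition supn {T : Type} {R : realType} (A : set T) (f : T -> R) : R :=
  sup [set `|f t| | t in A].

(* Elements of C(F), F a subset of K, are represented by functions K -> R
   continuous on F (within F); two such functions denote the same element of
   C(F) iff they agree on F. *)
Definition contF {R : realType} {K : topologicalType} (F : set K) (f : K -> R) :=
  {within F, continuous f}.

Definition extension_operator {R : realType} {K : topologicalType}
    (F : set K) (E : (K -> R) -> (K -> R)) : Prop :=
  [/\ (forall f g, contF F f -> contF F g -> (forall x, F x -> f x = g x) ->
         E f = E g),
      (forall f, contF F f -> continuous (E f)),
      (forall (a : R) f g, contF F f -> contF F g ->
         E (fun x => a * f x + g x) = (fun x => a * E f x + E g x)),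
      (exists M : R, forall f, contF F f ->
         supn setT (E f) <= M * supn F f) &
      (forall f, contF F f -> forall x, F x -> E f x = f x)].

Definition extension_property (R : realType) (K : topologicalType) : Prop :=
  forall F : set K, closed F -> F !=set0 ->
    exists E : (K -> R) -> (K -> R), extension_operator F E.

Definition c0 {R : realType} {I : Type} (x : I -> R) : Prop :=
  forall e : R, 0 < e -> finite_set [set i | e <= `|x i|].

Definition c0_isometric_embedding {R : realType} {I : Type} {K : topologicalType}
    (S : (I -> R) -> (K -> R)) : Prop :=
  [/\ (forall x, c0 x -> continuous (S x)),
      (forall (a : R) x y, c0 x -> c0 y ->
         S (fun i => a * x i + y i) = (fun k => a * S x k + S y k)) &
      (forall x, c0 x -> supn setT (S x) = supn setT x)].

Definition image_complemented {R : realType} {I : Type} {K : topologicalType}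
    (S : (I -> R) -> (K -> R)) : Prop :=
  exists P : (K -> R) -> (K -> R),
    [/\ (forall f, continuous f -> continuous (P f)),
        (forall (a : R) f g, continuous f -> continuous g ->
           P (fun k => a * f k + g k) = (fun k => a * P f k + P g k)),
        (exists M : R, forall f, continuous f ->
           supn setT (P f) <= M * supn setT f),
        (forall f, continuous f -> exists2 x, c0 x & P f = S x) &
        (forall x, c0 x -> P (S x) = S x)].

From HB Require Import structures.
From mathcomp Require Import all_boot all_order all_algebra.
From mathcomp Require Import all_classical all_reals all_analysis.
From mathcomp Require Import ring.
Set Implicit Arguments. Unset Strict Implicit. Unset Printing Implicit Defensive.
Import Order.TTheory GRing.Theory Num.Theory numFieldNormedType.Exports.
Local Open Scope classical_set_scope.
Local Open Scope ring_scope.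

(* Each unit vector [e_i] of c_0(I) is sent by the isometry [S] to a function
   attaining norm 1 at some point [k_i], and an extremality argument shows
   [S x (k_i) = x_i S e_i (k_i)] for every [x]: the points [k_i] read off the
   coordinates. Hence every [S x] vanishes on the set [L] of cluster points of
   [(k_i)] along the cofinite filter. Let [E] be a bounded extension operator
   for the closed set [L]. For [f] in C(K), [f - E (f|_L)] is continuous and
   vanishes on [L], so by compactness its values at the [k_i] tend to 0;
   [P f := S ((f - E f)(k_i) S e_i (k_i))_i] is then a bounded linear map into
   the image of [S], and it fixes each [S x] because [E] kills [S x]. *)

Section SupNorm.
Variables (R : realType) (T : Type).
Implicit Types (A : set T) (f : T -> R).

Lemma supn_ge0 A f : 0 <= supn A f.
Proof.
rewrite /supn; have [[[y [t At _]] ub]|nhs] := pselect (has_sup [set `|f t| | t in A]).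
  by apply: le_trans (normr_ge0 (f t)) _; apply: ub_le_sup => //; exists t.
by rewrite sup_out.
Qed.

Lemma ler_supn A f t :
  has_ubound [set `|f t| | t in A] -> A t -> `|f t| <= supn A f.
Proof. by move=> ub At; apply: ub_le_sup => //; exists t. Qed.

Lemma supn_le A f M : 0 <= M -> (forall t, A t -> `|f t| <= M) -> supn A f <= M.
Proof.
move=> M0 fM; rewrite /supn.
have [->|ne] := eqVneq [set `|f t| | t in A] set0; first by rewrite sup0.
by apply: ge_sup; [exact: (set0P _).1 ne | move=> _ [t At <-]; exact: fM].
Qed.

Lemma le_supn_subset A B f : A `<=` B ->
  has_ubound [set `|f t| | t in B] -> supn A f <= supn B f.
Proof.
move=> AB ub; apply: supn_le => [|t At]; first exact: supn_ge0.
exact/ler_supn/AB.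
Qed.

End SupNorm.

Lemma continuous_norm_has_ubound (R : realType) (K : topologicalType) (h : K -> R) :
  compact [set: K] -> continuous h -> has_ubound [set `|h t| | t in [set: K]].
Proof.
move=> cK hc; have nc : continuous (fun t => `|h t|) by move=> t; apply: cvg_norm; exact: hc.
have [->|ne] := eqVneq [set `|h t| | t in [set: K]] set0; first by exists 0.
have [] := compact_has_sup ((set0P _).1 ne)
  (continuous_compact (continuous_subspaceT nc) cK).
by [].
Qed.

Section C0.
Variables (R : realType) (I : Type).
Implicit Types (x y : I -> R).

Lemma c0_has_ubound x : c0 x -> has_ubound [set `|x i| | i in [set: I]].
Proof.
move=> /(_ 1 ltr01) fin.
set B := [set `|x i| | i in [set i | 1 <= `|x i|]].
have [B0|ne] := eqVneq B set0.
  exists 1 => _ [i _ <-]; rewrite leNgt; apply/negP => lt1.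
  have : B `|x i| by exists i => //; exact: ltW.
  by rewrite B0.
have cB : compact B by apply: finite_compact; exact: finite_image.
have [_ [M MB]] := compact_has_sup ((set0P _).1 ne) cB.
exists (Num.max 1 M) => _ [i _ <-].
have [le1|lt1] := leP 1 `|x i|; last by rewrite le_max ltW.
by rewrite le_max MB ?orbT //; exists i.
Qed.

Lemma c0_lincomb (a : R) x y : c0 x -> c0 y -> c0 (fun i => a * x i + y i).
Proof.
move=> cx cy e e0; have e20 : 0 < e / 2 by rewrite divr_gt0.
have a1 : 0 < `|a| + 1 by rewrite ltr_pwDr.
apply: (@sub_finite_set _ _
  ([set i | e / 2 / (`|a| + 1) <= `|x i|] `|` [set i | e / 2 <= `|y i|])); last first.
  by rewrite finite_setU; split; [apply: cx; rewrite divr_gt0 | exact: cy].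
move=> i /= eai; apply: contrapT => /not_orP [/negP nx /negP ny].
rewrite -ltNge ltr_pdivlMr // in nx; rewrite -ltNge in ny.
have : `|a * x i + y i| < e.
  apply: le_lt_trans (ler_normD _ _) _.
  rewrite [e](splitr e) normrM; apply: ltr_leD; last exact: ltW.
  apply: le_lt_trans nx; rewrite mulrC.
  by apply: ler_wpM2l => //; rewrite lerDl.
by rewrite ltNge eai.
Qed.

Lemma c0_mul_unimodular x (s : I -> R) :
  (forall i, `|s i| = 1) -> c0 x -> c0 (fun i => x i * s i).
Proof.
move=> s1 cx e e0; apply: sub_finite_set (cx e e0) => i /=.
by rewrite normrM s1 mulr1.
Qed.

Definition unitv (i : I) : I -> R := fun j => if `[< j = i >] then 1 else 0.

Lemma unitv_c0 i : c0 (unitv i).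
Proof.
move=> e e0; apply: (@sub_finite_set _ _ [set i]); last exact: finite_set1.
by move=> j /=; rewrite /unitv; case: asboolP => // _; rewrite normr0 leNgt e0.
Qed.

Lemma supn_unitv i : supn setT (unitv i) = 1.
Proof.
apply/eqP; rewrite eq_le; apply/andP; split.
  by apply: supn_le => // j _; rewrite /unitv; case: asboolP; rewrite ?normr1 ?normr0.
have := ler_supn (c0_has_ubound (unitv_c0 i)) (t:=i) Logic.I.
by rewrite /unitv; case: asboolP => // _; rewrite normr1.
Qed.

End C0.

Section PeakPoints.
Variables (R : realType) (K : topologicalType) (I : Type).
Variable S : (I -> R) -> (K -> R).
Hypotheses (HS : c0_isometric_embedding S) (cK : compact [set: K]).

Lemma norm_Sx_le x t : c0 x -> `|S x t| <= supn setT x.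
Proof.
case: HS => Sc _ Si cx; rewrite -Si //.
by apply: ler_supn => //; apply: continuous_norm_has_ubound => //; exact: Sc.
Qed.

Lemma exists_peak i : exists k : K, `|S (unitv R i) k| = 1.
Proof.
case: HS => Sc _ Si; have ci := unitv_c0 (R:=R) i.
have [[t0 _]|K0] := pselect (exists t : K, True); last first.
  suff : supn setT (S (unitv R i)) = 0 by rewrite Si // supn_unitv => /eqP; rewrite oner_eq0.
  rewrite /supn; suff -> : [set `|S (unitv R i) t| | t in [set: K]] = set0 by rewrite sup0.
  by apply/seteqP; split => // y [t _ _]; apply: K0; exists t.
have nc : continuous (fun t => `|S (unitv R i) t|) by move=> t; apply: cvg_norm; exact: Sc.
have [k _ kmax] := compact_EVT_max (ex_intro _ t0 Logic.I) cK (continuous_subspaceT nc).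
exists k; apply/eqP; rewrite eq_le; apply/andP; split.
  by have := norm_Sx_le k ci; rewrite supn_unitv.
rewrite -(supn_unitv R i) -Si //; apply: supn_le => // t _.
exact: kmax (in_setT t).
Qed.

(* If [y i = 0], adding a suitable multiple of [unitv i] to [y] does not
   increase its norm but moves [S y k] away from 0 by [|S y k|]. *)
Lemma peak_Sx_eq0 i k : `|S (unitv R i) k| = 1 ->
  forall y, c0 y -> y i = 0 -> S y k = 0.
Proof.
case: HS => _ Sl _ hse y cy yi.
set se := S (unitv R i) k; set c := S y k; set s := supn setT y.
set z := fun j => s * Num.sg c * se * unitv R i j + y j.
have cz : c0 z by apply: c0_lincomb => //; exact: unitv_c0.
have se2 : se * se = 1 by rewrite -expr2 -real_normK ?num_real // hse expr1n.
have zs : supn setT z <= s.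
  apply: supn_le => [|j _]; first exact: supn_ge0.
  rewrite /z /unitv; case: asboolP => [->|_]; last first.
    by rewrite mulr0 add0r; apply: ler_supn => //; exact: c0_has_ubound.
  rewrite yi mulr1 addr0 !normrM normr_sg hse mulr1 ger0_norm ?supn_ge0 //.
  by case: (c != 0); rewrite ?mulr1 ?mulr0 ?supn_ge0.
have Szk : S z k = Num.sg c * (s + `|c|).
  rewrite /z Sl //; last exact: unitv_c0.
  by rewrite -/se -/c -mulrA se2 mulr1 mulrDr -numEsg mulrC.
have := norm_Sx_le k cz; rewrite Szk.
have [->//|cn0] := eqVneq c 0.
rewrite normrM normr_sg cn0 mul1r ger0_norm; last by rewrite addr_ge0 ?supn_ge0.
by move=> /le_trans/(_ zs); rewrite gerDl normr_le0 (negbTE cn0).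
Qed.

Lemma peak_Sx i k : `|S (unitv R i) k| = 1 ->
  forall x, c0 x -> S x k = x i * S (unitv R i) k.
Proof.
move=> hse x cx.
have cy : c0 (fun j => - x i * unitv R i j + x j) by apply: c0_lincomb => //; exact: unitv_c0.
have := peak_Sx_eq0 hse cy.
case: HS => _ Sl _; rewrite Sl //; last exact: unitv_c0.
rewrite /unitv; case: asboolP => // _; rewrite mulr1 addNr => /(_ erefl) /eqP.
by rewrite mulNr addrC subr_eq0 => /eqP.
Qed.

End PeakPoints.

Section CofiniteCluster.
Variables (R : realType) (K : topologicalType) (I : Type) (k : I -> K).

Definition cofinite_cluster : set K :=
  [set p | forall V, nbhs p V -> forall A : set I, finite_set A ->
     exists j, ~ A j /\ V (k j)].

Lemma closed_cofinite_cluster : closed cofinite_cluster.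
Proof.
move=> p clp V pV A fA.
have [q [Lq iq]] := clp _ (nbhs_interior pV).
exact: Lq V iq A fA.
Qed.

Lemma cofinite_cluster_c0_eq0 (h : K -> R) p :
  continuous h -> c0 (h \o k) -> cofinite_cluster p -> h p = 0.
Proof.
move=> hc ch Lp; apply/eqP/negP => /negP hp0.
set c := `|h p|; have c20 : 0 < c / 2 by rewrite divr_gt0 ?normr_gt0.
have nV : \forall t \near p, `|h p - h t| < c / 2.
  exact: cvgr_dist_lt _ _ (hc p) _ c20.
move: nV; rewrite -nbhs_nearE => nV.
have [j [/negP]] := Lp _ nV _ (ch _ c20); rewrite -ltNge /= => hkj nearj.
have : c <= `|h p - h (k j)| + `|h (k j)|.
  by have := ler_normD (h p - h (k j)) (h (k j)); rewrite subrK.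
by rewrite leNgt [c in _ < c]splitr ltrD.
Qed.

Lemma c0_comp_cofinite_cluster (h : K -> R) : compact [set: K] ->
  continuous h -> (forall p, cofinite_cluster p -> h p = 0) -> c0 (h \o k).
Proof.
(* If [A] below is infinite, the sets containing [k j] for all but finitely many
   [j] in [A] form a proper filter, whose cluster point (by compactness) lies in
   [cofinite_cluster] and yet is a limit of points where [|h| >= e]. *)
move=> cK hc hL e e0; apply: contrapT => infA.
set A := [set i | e <= `|(h \o k) i|].
set G := fun B : set K => exists F : set I,
  finite_set F /\ forall j, A j -> ~ F j -> B (k j).
have PG : ProperFilter G.
  split.
  - move=> [F [fF FB]].
    have [j [Aj nFj]] := infinite_setN0 (infinite_setD infA fF).
    exact: FB j Aj nFj.
  - split.
    + by exists set0; split => //; exact: finite_set0.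
    + move=> B1 B2 [F1 [f1 H1]] [F2 [f2 H2]]; exists (F1 `|` F2).
      split=> [|j Aj nF]; first by rewrite finite_setU.
      by split; [apply: H1 => // ?; apply: nF; left | apply: H2 => // ?; apply: nF; right].
    + by move=> B1 B2 sB [F [fF H]]; exists F; split => // j Aj nF; exact/sB/H.
have [p [_ clp]] := cK G PG filterT.
have Lp : cofinite_cluster p.
  move=> V pV F fF.
  have GB : G [set q | exists j, A j /\ ~ F j /\ q = k j].
    by exists F; split => // j Aj nF; exists j.
  by have [_ [[j [Aj [nFj ->]]] Vj]] := clp _ _ GB pV; exists j.
have nV : \forall t \near p, `|h p - h t| < e by exact: cvgr_dist_lt _ _ (hc p) _ e0.
have GA : G [set q | exists j, A j /\ q = k j].
  by exists set0; split; [exact: finite_set0 | move=> j Aj _; exists j].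
have [_ [[j [Aj ->]] Vj]] := clp _ _ GA nV.
move: Vj Aj; rewrite /A /= hL // sub0r normrN => lt le.
by have := lt_le_trans lt le; rewrite ltxx.
Qed.

End CofiniteCluster.

Section BoundedExtension.
Variables (R : realType) (K : topologicalType).

Lemma extension_operator_eq0 (F : set K) (E : (K -> R) -> (K -> R)) f :
  extension_operator F E -> contF F f -> (forall p, F p -> f p = 0) ->
  E f = fun _ => 0.
Proof.
case=> Ewd _ Elin _ _ cf f0.
have c0F : contF F (fun _ : K => 0 : R) by apply: continuous_subspaceT => t; exact: cvg_cst.
rewrite (Ewd f (fun _ => 0) cf c0F f0).
have := Elin (-1) _ _ c0F c0F.
have -> : (fun x : K => -1 * 0 + 0) = (fun _ => 0 :> R).
  by apply/funext => x; rewrite mulr0 addr0.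
by move=> E0; apply/funext => t; rewrite E0 mulN1r addNr.
Qed.

Record bounded_extension (L : set K) (G : (K -> R) -> (K -> R)) (M : R) : Prop := {
  extension_continuous : forall f : K -> R, continuous f -> continuous (G f);
  extension_eq : forall f : K -> R, continuous f -> forall p, L p -> G f p = f p;
  extension_linear : forall (a : R) (f g : K -> R), continuous f -> continuous g ->
    G (fun t => a * f t + g t) = (fun t => a * G f t + G g t);
  extension_bound_ge0 : 0 <= M;
  extension_bound : forall f : K -> R, continuous f ->
    forall t, `|G f t| <= M * supn setT f;
  extension_eq0 : forall f : K -> R, continuous f -> (forall p, L p -> f p = 0) ->
    G f = fun _ => 0 }.

(* The zero operator is a bounded extension for the empty set, which the
   extension property does not cover. *)
Lemma exists_bounded_extension (L : set K) :
  compact [set: K] -> extension_property R K -> closed L ->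
  exists G M, bounded_extension L G M.
Proof.
move=> cK EP cL; have [->|/set0P L0] := eqVneq L set0.
  exists (fun _ _ => 0), 0; split => //.
  - by move=> f _; exact: cst_continuous.
  - by move=> a f g _ _; apply/funext => t; rewrite mulr0 addr0.
  - by move=> f _ t; rewrite normr0 mul0r.
have [E EL] := EP L cL L0.
have ct (f : K -> R) : continuous f -> contF L f by move=> cf; exact: continuous_subspaceT.
case: (EL) => _ Ec Elin [N EN] Eeq.
exists E, `|N|; split => //.
- by move=> f /ct /Ec.
- by move=> f /ct /Eeq.
- by move=> a f g /ct cf /ct cg; exact: Elin.
- move=> f cf t; have ubE := continuous_norm_has_ubound cK (Ec f (ct f cf)).
  apply: le_trans (ler_supn ubE (t:=t) Logic.I) _.
  apply: le_trans (EN f (ct f cf)) _.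
  apply: le_trans (ler_wpM2r (supn_ge0 _ _) (ler_norm N)) _.
  apply: ler_wpM2l => //; apply: le_supn_subset => //.
  exact: continuous_norm_has_ubound.
- by move=> f /ct cf fL; exact: extension_operator_eq0 EL cf fL.
Qed.

End BoundedExtension.

Section Projection.
Variables (R : realType) (K : topologicalType) (I : Type).
Variables (S : (I -> R) -> (K -> R)) (k : I -> K).
Variables (G : (K -> R) -> (K -> R)) (M : R).
Hypotheses (HS : c0_isometric_embedding S) (cK : compact [set: K]).
Hypothesis peak : forall i, `|S (unitv R i) (k i)| = 1.
Hypothesis HG : bounded_extension (cofinite_cluster k) G M.

Definition proj_coord (f : K -> R) (i : I) : R :=
  (f (k i) - G f (k i)) * S (unitv R i) (k i).

Lemma Sx_eq0_cofinite_cluster x p : c0 x -> cofinite_cluster k p -> S x p = 0.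
Proof.
case: (HS) => Sc _ _ cx; apply: cofinite_cluster_c0_eq0 => //; first exact: Sc.
have -> : S x \o k = fun j => x j * S (unitv R j) (k j).
  by apply/funext => j /=; rewrite (peak_Sx HS cK (peak j) cx).
exact: c0_mul_unimodular.
Qed.

Lemma c0_proj_coord f : continuous f -> c0 (proj_coord f).
Proof.
move=> cf; apply: c0_mul_unimodular peak _.
have cfG : continuous (fun t => f t - G f t).
  by move=> t; apply: cvgB; [exact: cf | exact: (extension_continuous HG)].
apply: (c0_comp_cofinite_cluster (h := fun t => f t - G f t)) => // p Lp.
by rewrite (extension_eq HG) // subrr.
Qed.

Lemma proj_coord_lincomb (a : R) f g : continuous f -> continuous g ->
  proj_coord (fun t => a * f t + g t) = fun i => a * proj_coord f i + proj_coord g i.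
Proof.
move=> cf cg; apply/funext => i.
by rewrite /proj_coord (extension_linear HG) //=; ring.
Qed.

Lemma supn_proj_coord_le f : continuous f ->
  supn setT (proj_coord f) <= (1 + M) * supn setT f.
Proof.
move=> cf; have M0 := extension_bound_ge0 HG.
apply: supn_le => [|i _]; first by rewrite mulr_ge0 ?supn_ge0 ?addr_ge0.
rewrite /proj_coord normrM peak mulr1 mulrDl mul1r.
apply: le_trans (ler_normB _ _) _; apply: lerD; last exact: (extension_bound HG).
by apply: ler_supn => //; exact: continuous_norm_has_ubound.
Qed.

(* [G] kills [S x], which vanishes on the cluster set, and the peaks read the
   coordinates back: [S x (k i) = x i * S e_i (k i)] with [S e_i (k i) = ±1]. *)
Lemma proj_coord_S x : c0 x -> proj_coord (S x) = x.
Proof.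
case: (HS) => Sc _ _ cx; apply/funext => i.
have SxL p : cofinite_cluster k p -> S x p = 0 by exact: Sx_eq0_cofinite_cluster.
rewrite /proj_coord (extension_eq0 HG (Sc x cx) SxL) subr0 (peak_Sx HS cK (peak i) cx).
rewrite -mulrA -expr2 -real_normK ?num_real //.
by rewrite peak expr1n mulr1.
Qed.

End Projection.

Theorem corollary2p6 (R : realType) (K : topologicalType) (I : Type) :
  hausdorff_space K -> compact [set: K] -> extension_property R K ->
  forall S : (I -> R) -> (K -> R),
    c0_isometric_embedding S -> image_complemented S.
Proof.
move=> _ cK EP S HS; case: (HS) => Sc Sl Si.
have /choice [k peak] := exists_peak HS cK.
have [G [M HG]] := exists_bounded_extension cK EP (closed_cofinite_cluster (k:=k)).
have cP := c0_proj_coord cK peak HG.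
exists (fun f => S (proj_coord S k G f)); split.
- by move=> f /cP /Sc.
- by move=> a f g cf cg; rewrite (proj_coord_lincomb S HG) // Sl //; apply: cP.
- exists (1 + M) => f cf; rewrite Si; last exact: cP.
  exact: (supn_proj_coord_le cK peak HG).
- by move=> f /cP cf; exists (proj_coord S k G f).
- by move=> x cx; rewrite (proj_coord_S HS cK peak HG).
Qed.
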